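(* Let $(G_1^p,G_2^p)$ be a pair of twin polymer graphs. Then the Weisfeiler–Lehman (WL) test cannot distinguish $G_1^p$ and $G_2^p$: at every iteration of WL color refinement, the multiset of colors of the nodes in one period of $G_1^p$ equals the multiset of colors of the nodes in one period of $G_2^p$.
   Context: A monomer graph is $G=(V,E,\mathbf{X})$ with atoms $V=\{v_0,\dots,v_{n-1}\}$, bonds $E$, atom features $\mathbf{x}_i$, and boundary atoms $v_0,v_{n-1}$. Its polymer graph $G^p$ has nodes $v^p_i$, $i\in\mathbb{Z}$, with $v^p_i$ carrying the features of $v_{i\bmod n}$, and edges $(v^p_{kn+a},v^p_{kn+b})$ for all $k\in\mathbb{Z}$ and $(v_a,v_b)\in E$, plus $(v^p_{kn-1},v^p_{kn})$ for all $k\in\mathbb{Z}$. Its induced star-linking graph $G^*$ has node set $V$, edge set $E\cup\{(v_0,v_{n-1})\}$ and the same features. Two polymers with monomer graphs $G_1,G_2$ and polymer graphs $G_1^p\ne G_2^p$ (non-isomorphic) form a pair of twin polymer graphs if their induced star-linking graphs coincide, $G_1^*=G_2^*$ (i.e. are isomorphic as node-attributed graphs). The WL test initializes node colors by node features and iteratively recolors each node by (a hash of) its current color together with the multiset of its neighbors' colors; colors on a polymer graph are periodic, and one period of $G^p$ is the node set $\{v^p_0,\dots,v^p_{n-1}\}$. *)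

From mathcomp Require Import all_boot all_order all_algebra.
Unset Printing Implicit Defensive.
Import GRing.Theory Num.Theory.

(* A monomer graph with msz.+1 atoms v_0 .. v_msz (so at least one atom);
   v_0 = ord0 and v_{n-1} = ord_max are the boundary atoms.
   Bonds are given by a relation on atoms, features by a function. *)
Record monomer (F : Type) := Monomer {
  msz : nat;
  bonds : rel 'I_msz.+1;
  feat : 'I_msz.+1 -> F }.
Arguments msz {F} m : rename.
Arguments bonds {F} m : rename.
Arguments feat {F} m : rename.

Definition monomer_wf {F : Type} (G : monomer F) : Prop :=
  symmetric (bonds G) /\ irreflexive (bonds G).

(* Edge multiplicities of G^* : the bonds E plus the extra edge (v_0,v_{n-1}).
   (Counted as a multigraph; when (v_0,v_{n-1}) is not a bond this is the
   simple graph with edge set E ∪ {(v_0,v_{n-1})}.) *)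
Definition star_mult {F : Type} (G : monomer F) (a b : 'I_(msz G).+1) : nat :=
  bonds G a b + (((a == ord0) && (b == ord_max)) || ((a == ord_max) && (b == ord0))).

Definition star_iso {F : Type} (G1 G2 : monomer F) : Prop :=
  exists s : 'I_(msz G1).+1 -> 'I_(msz G2).+1,
    bijective s /\
    (forall a, feat G2 (s a) = feat G1 a) /\
    (forall a b, star_mult G2 (s a) (s b) = star_mult G1 a b).

(* node v^p_i, i : int, corresponds to atom (i mod n) of period (i div n) *)
Definition atom {F : Type} (G : monomer F) (i : int) : 'I_(msz G).+1 :=
  inord (absz (i %% (msz G).+1)%Z).
Definition period {F : Type} (G : monomer F) (i : int) : int :=
  (i %/ (msz G).+1)%Z.

Definition pfeat {F : Type} (G : monomer F) (i : int) : F := feat G (atom G i).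

(* adjacency in G^p: (v^p_{kn+a}, v^p_{kn+b}) for bonds (v_a,v_b), and
   (v^p_{kn-1}, v^p_{kn}) for all k (undirected). *)
Definition padj {F : Type} (G : monomer F) (i j : int) : bool :=
  ((period G i == period G j) && bonds G (atom G i) (atom G j))
  || ((j == i + 1)%R && (atom G j == ord0))
  || ((i == j + 1)%R && (atom G i == ord0)).

Definition poly_iso {F : Type} (G1 G2 : monomer F) : Prop :=
  exists phi : int -> int,
    bijective phi /\
    (forall i, pfeat G2 (phi i) = pfeat G1 i) /\
    (forall i j, padj G2 (phi i) (phi j) = padj G1 i j).

Definition twin_polymers {F : Type} (G1 G2 : monomer F) : Prop :=
  star_iso G1 G2 /\ ~ poly_iso G1 G2.

(* All neighbours of v^p_i lie within distance n of i; the neighbour list is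
   the list of j in the window [i-n, i+n] adjacent to i (no repetitions). *)
Definition pneighbors {F : Type} (G : monomer F) (i : int) : seq int :=
  [seq j <- [seq (i + (k%:Z - (msz G).+1%:Z))%R | k <- iota 0 (2 * (msz G).+1).+1]
   | padj G i j].

(* WL colours with colour type C, initial colouring [init] of features and
   hash [h] of (own colour, list of neighbour colours); [h] is required to
   depend only on the multiset of neighbour colours. *)
Fixpoint wl {F : Type} {C : Type} (init : F -> C) (h : C -> seq C -> C)
    (G : monomer F) (t : nat) (i : int) : C :=
  match t with
  | 0 => init (pfeat G i)
  | t'.+1 => h (wl init h G t' i) [seq wl init h G t' j | j <- pneighbors G i]
  end.

Definition multiset_hash {C : eqType} (h : C -> seq C -> C) : Prop :=
  forall c s1 s2, perm_eq s1 s2 -> h c s1 = h c s2.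

Definition period_colors {F : Type} {C : Type} (init : F -> C)
    (h : C -> seq C -> C) (G : monomer F) (t : nat) : seq C :=
  [seq wl init h G t k%:Z | k <- iota 0 (msz G).+1].

From mathcomp Require Import all_boot all_order all_algebra zify.
Import GRing.Theory.

(* The atoms of the neighbours of a node of G^p over atom a are, with
   multiplicity, the bond partners of a, plus v_0 if a = v_{n-1} and v_{n-1}
   if a = v_0. So the WL colour of v^p_i only depends on the atom of i, and
   equals the WL colour of that atom in the finite quotient multigraph on V. For n >= 2 this
   quotient is exactly G^*; for n = 1 the linking edge becomes a loop, counted
   twice. WL colours on finite multigraphs are invariant under isomorphism, and
   G_1^* ~ G_2^* forces both monomers to have the same size, hence the same
   quotient. Neither simplicity of the monomers nor non-isomorphism of the
   polymer graphs plays a role. *)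

Lemma count_or3 (T : Type) (p1 p2 p3 : pred T) (s : seq T) :
  (forall x, ~~ (p1 x && p2 x)) -> (forall x, ~~ (p1 x && p3 x)) ->
  (forall x, ~~ (p2 x && p3 x)) ->
  count (fun x => [|| p1 x, p2 x | p3 x]) s = count p1 s + count p2 s + count p3 s.
Proof.
move=> dis12 dis13 dis23; elim: s => //= x s ->.
by move: (dis12 x) (dis13 x) (dis23 x); case: (p1 x); case: (p2 x); case: (p3 x) => //=; lia.
Qed.

Lemma count_iota_eq_and (k0 m : nat) (c : bool) :
  count (fun k => (k == k0) && c) (iota 0 m) = (k0 < m) && c.
Proof.
case: c; last by rewrite (eq_count (fun k => andbF _)) count_pred0 andbF.
by rewrite (eq_count (fun k => andbT _)) count_uniq_mem ?iota_uniq // mem_iota andbT.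
Qed.

Definition mgraph_nbhd {T : finType} (m : T -> T -> nat) (a : T) : seq T :=
  flatten [seq nseq (m a b) b | b <- enum T].

Lemma count_mgraph_nbhd (T : finType) (m : T -> T -> nat) (a b : T) :
  count_mem b (mgraph_nbhd m a) = m a b.
Proof.
rewrite count_flatten sumnE !big_map -enumT big_enum /= (bigD1 b) //= big1.
  by rewrite count_nseq /= eqxx mul1n addn0.
by move=> c /negbTE c_neq_b; rewrite count_nseq /= c_neq_b.
Qed.

Lemma perm_enum_bij (T1 T2 : finType) (s : T1 -> T2) :
  bijective s -> perm_eq (map s (enum T1)) (enum T2).
Proof.
move=> s_bij; apply: uniq_perm; first by rewrite map_inj_uniq ?enum_uniq //; apply: bij_inj.
  exact: enum_uniq.
by move=> x; rewrite mem_enum; case: s_bij => g _ gK; rewrite -(gK x) map_f ?mem_enum.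
Qed.

Section MultigraphWL.
Context {F : Type} {C : eqType} (init : F -> C) {h : C -> seq C -> C}.

Fixpoint mgraph_wl {T : finType} (feat : T -> F) (m : T -> T -> nat) (t : nat) (a : T) : C :=
  if t is t'.+1 then h (mgraph_wl feat m t' a) [seq mgraph_wl feat m t' b | b <- mgraph_nbhd m a]
  else init (feat a).

Hypothesis h_multiset : multiset_hash h.

Context {T1 T2 : finType} {feat1 : T1 -> F} {feat2 : T2 -> F}.
Context {m1 : T1 -> T1 -> nat} {m2 : T2 -> T2 -> nat} {s : T1 -> T2}.
Hypotheses (s_bij : bijective s) (s_feat : forall a, feat2 (s a) = feat1 a).
Hypothesis s_mult : forall a b, m2 (s a) (s b) = m1 a b.

Lemma mgraph_nbhd_iso a : perm_eq (mgraph_nbhd m2 (s a)) (map s (mgraph_nbhd m1 a)).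
Proof.
apply/allP => x _; apply/eqP; case: s_bij => g _ gK; rewrite -(gK x).
rewrite count_mgraph_nbhd s_mult count_map -count_mgraph_nbhd.
by apply: eq_count => y /=; rewrite (inj_eq (bij_inj s_bij)).
Qed.

Lemma mgraph_wl_iso t a : mgraph_wl feat2 m2 t (s a) = mgraph_wl feat1 m1 t a.
Proof.
elim: t a => [|t IH] a /=; first by rewrite s_feat.
rewrite IH; apply: h_multiset; rewrite -(eq_map IH) (map_comp _ s).
by apply: perm_map; apply: mgraph_nbhd_iso.
Qed.

Lemma perm_mgraph_wl_iso t :
  perm_eq [seq mgraph_wl feat1 m1 t a | a <- enum T1] [seq mgraph_wl feat2 m2 t b | b <- enum T2].
Proof.
rewrite -(eq_map (mgraph_wl_iso t)) (map_comp _ s).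
by apply: perm_map; apply: perm_enum_bij.
Qed.

End MultigraphWL.

Arguments mgraph_wl {F C} init h {T} feat m t a.

Section PolymerNeighbours.
Context {F : Type} (G : monomer F).
Local Notation n := (msz G).+1.
Local Open Scope ring_scope.

Lemma atom_modz j : (atom G j : nat)%:Z = (j %% n)%Z.
Proof.
rewrite /atom inordK; first by rewrite gez0_abs // modz_ge0.
have := ltz_pmod j (isT : 0 < n%:Z).
have := modz_ge0 j (isT : n%:Z != 0).
lia.
Qed.

Lemma atom_period_decomp j : j = period G j * n%:Z + (atom G j : nat)%:Z.
Proof. by rewrite atom_modz /period -divz_eq. Qed.

Lemma eq_atom_period j p (b : 'I_n) :
  (atom G j == b) && (period G j == p) = (j == p * n%:Z + (b : nat)%:Z).
Proof.
apply/idP/eqP => [/andP[/eqP <- /eqP <-]|->]; first exact: atom_period_decomp.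
have b_small : 0 <= (b : nat)%:Z < n%:Z by rewrite ltz_nat ltn_ord.
apply/andP; split; last by rewrite /period divzMDl // divz_small ?addr0.
by apply/eqP/val_inj; rewrite /atom /= modzMDl modz_small // inord_val.
Qed.

Lemma atom_nat (a : 'I_n) : atom G (a : nat)%:Z = a.
Proof.
apply/eqP; suff /andP[] : (atom G (a : nat)%:Z == a) && (period G (a : nat)%:Z == 0) by [].
by rewrite eq_atom_period mul0r add0r.
Qed.

Lemma atom_addr1_eq0 i : (atom G (i + 1) == ord0) = (atom G i == ord_max).
Proof.
apply/eqP/eqP => atom_eq; apply/eqP.
  suff /andP[] : (atom G i == ord_max) && (period G i == period G (i + 1) - 1) by [].
  by rewrite eq_atom_period; have := atom_period_decomp (i + 1); rewrite atom_eq /=; lia.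
suff /andP[] : (atom G (i + 1) == ord0) && (period G (i + 1) == period G i + 1) by [].
by rewrite eq_atom_period; have := atom_period_decomp i; rewrite atom_eq /=; lia.
Qed.

Definition window_node i (k : nat) : int := i + (k%:Z - n%:Z).

Variable i : int.
Local Notation a := (atom G i).
Local Notation j k := (window_node i k).

Lemma window_bond k b :
  (period G i == period G (j k)) && bonds G a (atom G (j k)) && (atom G (j k) == b)
  = (k == b + n - a)%N && bonds G a b.
Proof.
have i_decomp := atom_period_decomp i; have a_lt := ltn_ord a; have b_lt := ltn_ord b.
apply/idP/idP => [/andP[/andP[/eqP p_eq bond] /eqP atom_j]|/andP[/eqP k_eq bond]].
  have /eqP : (atom G (j k) == b) && (period G (j k) == period G i).
    by rewrite atom_j p_eq !eqxx.
  rewrite eq_atom_period /window_node -atom_j bond andbT => j_eq.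
  by apply/eqP; lia.
have /andP[/eqP atom_j /eqP p_eq] : (atom G (j k) == b) && (period G (j k) == period G i).
  by rewrite eq_atom_period /window_node; apply/eqP; lia.
by rewrite p_eq atom_j bond !eqxx.
Qed.

Lemma window_succ k b :
  (j k == i + 1) && (atom G (j k) == ord0) && (atom G (j k) == b)
  = [&& k == n.+1, a == ord_max & b == ord0]%N.
Proof.
apply/idP/idP => [/andP[/andP[/eqP j_eq atom_j] /eqP <-]|/and3P[/eqP k_eq a_max /eqP ->]].
  rewrite atom_j andbT -atom_addr1_eq0 -j_eq atom_j andbT.
  by apply/eqP; move: j_eq; rewrite /window_node; lia.
have -> : j k = i + 1 by rewrite /window_node k_eq; lia.
by rewrite atom_addr1_eq0 a_max eqxx.
Qed.

Lemma window_pred k b :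
  (i == j k + 1) && (atom G i == ord0) && (atom G (j k) == b)
  = [&& k == msz G, a == ord0 & b == ord_max]%N.
Proof.
apply/idP/idP => [/andP[/andP[/eqP i_eq a_0] /eqP <-]|/and3P[/eqP k_eq a_0 /eqP ->]].
  rewrite a_0 -atom_addr1_eq0 -i_eq a_0 andbT.
  by apply/eqP; move: i_eq; rewrite /window_node; lia.
have i_eq : i = j k + 1 by rewrite /window_node k_eq; lia.
by rewrite {1}i_eq eqxx a_0 -atom_addr1_eq0 -i_eq a_0.
Qed.

Definition quotient_mult (a b : 'I_n) : nat :=
  (bonds G a b + (a == ord_max) && (b == ord0) + (a == ord0) && (b == ord_max))%N.

Lemma padj_window k b :
  padj G i (j k) && (atom G (j k) == b)
  = [|| (k == b + n - a)%N && bonds G a b, [&& k == n.+1, a == ord_max & b == ord0]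
      | [&& k == msz G, a == ord0 & b == ord_max]].
Proof. by rewrite /padj !andb_orl window_bond window_succ window_pred orbA. Qed.

Lemma count_pneighbors_atom b :
  count_mem b (map (atom G) (pneighbors G i)) = quotient_mult a b.
Proof.
have a_lt := ltn_ord a; have b_lt := ltn_ord b.
rewrite count_map /pneighbors count_filter count_map.
rewrite (@eq_count _ _ (fun k => padj G i (j k) && (atom G (j k) == b))); last first.
  by move=> k /=; rewrite andbC.
rewrite (eq_count (padj_window^~ b)) count_or3; first last.
- by move=> k; apply/negP => /andP[/and3P[/eqP -> _ _] /and3P[/eqP k_eq _ _]]; lia.
- move=> k; apply/negP => /andP[/andP[/eqP -> _] /and3P[/eqP k_eq /eqP a_0 _]].
  by move: k_eq; rewrite a_0 /=; lia.
- move=> k; apply/negP => /andP[/andP[/eqP -> _] /and3P[/eqP k_eq /eqP a_max _]].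
  by move: k_eq; rewrite a_max /=; lia.
rewrite !count_iota_eq_and.
have lt_bond : (b + n - a < (2 * n).+1)%N by lia.
have lt_succ : (n.+1 < (2 * n).+1)%N by lia.
have lt_pred : (msz G < (2 * n).+1)%N by lia.
by rewrite lt_bond lt_succ lt_pred.
Qed.

End PolymerNeighbours.

Lemma quotient_mult_star (F : Type) (G : monomer F) (a b : 'I_(msz G).+1) :
  quotient_mult G a b = star_mult G a b + (msz G == 0).
Proof.
rewrite /quotient_mult /star_mult -!val_eqE /= -!addnA; congr (_ + _).
move: (val a) (val b) (ltn_ord a) (ltn_ord b) => x y.
case: (msz G) => [|m]; first by case: x; case: y.
by case: x => [|x]; case: y => [|y] /=; rewrite ?addn0 //; lia.
Qed.

Section PolymerWL.
Context {F : Type} {C : eqType} (init : F -> C) {h : C -> seq C -> C}.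
Hypothesis h_multiset : multiset_hash h.
Variable G : monomer F.

Lemma perm_pneighbors_atom i :
  perm_eq (map (atom G) (pneighbors G i)) (mgraph_nbhd (quotient_mult G) (atom G i)).
Proof. by apply/allP => b _; apply/eqP; rewrite count_pneighbors_atom count_mgraph_nbhd. Qed.

Lemma wl_quotient t i :
  wl init h G t i = mgraph_wl init h (feat G) (quotient_mult G) t (atom G i).
Proof.
elim: t i => [|t IH] i //=.
rewrite IH; apply: h_multiset; rewrite (eq_map IH) (map_comp _ (atom G)).
exact/perm_map/perm_pneighbors_atom.
Qed.

Lemma period_colorsE t :
  period_colors init h G t
  = [seq mgraph_wl init h (feat G) (quotient_mult G) t a | a <- enum 'I_(msz G).+1].
Proof.
rewrite /period_colors -val_enum_ord -map_comp; apply: eq_map => a /=.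
by rewrite wl_quotient atom_nat.
Qed.

End PolymerWL.

Theorem lemma1 (F : Type) (G1 G2 : monomer F) :
  monomer_wf G1 -> monomer_wf G2 ->
  twin_polymers G1 G2 ->
  forall (C : eqType) (init : F -> C) (h : C -> seq C -> C),
    multiset_hash h ->
    forall t : nat, perm_eq (period_colors init h G1 t) (period_colors init h G2 t).
Proof.
move=> _ _ [[s [s_bij [s_feat s_star]]] _] C init h h_multiset t.
have msz_eq : msz G1 = msz G2 by have := bij_eq_card s_bij; rewrite !card_ord => -[].
have s_mult a b : quotient_mult G2 (s a) (s b) = quotient_mult G1 a b.
  by rewrite !quotient_mult_star s_star msz_eq.
rewrite !(period_colorsE init h_multiset).
exact (perm_mgraph_wl_iso init h_multiset s_bij s_feat s_mult t).
Qed.
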